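(* Let $A$ be a semisimple artinian ring, $A(\mathcal F)$ a flag subalgebra of $A$, and $B$ a subring of $A(\mathcal F)$. Then there exists a flag subalgebra $A'$ of $A$ with $B\subseteq A'\subseteq A(\mathcal F)$ such that $B$ is dense in $A'$.
   Context: A subring $B$ of a ring $A$ is called dense in $A$ if every simple left $A$-module $U$ is also simple as a $B$-$\mathrm{End}_A(U)$-bimodule. Flag subalgebras: if $A=M_n(D)$ with $D$ a division ring, $U=D^n$ its simple module (column vectors, $D$ acting on the right) and $\mathcal F: U=U_0\supset U_1\supset\dots\supset U_s=0$ a flag of $D$-subspaces, then $A(\mathcal F)=\{a\in A: aU_i\subseteq U_i \text{ for all } i\}$ is a flag subalgebra of $A$. If $A=\prod_i A_i$ with $A_i$ simple artinian, a flag subalgebra of $A$ is a subalgebra of the form $\prod_i A_i'$ with each $A_i'$ a flag subalgebra of $A_i$. *)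

From HB Require Import structures.
From mathcomp Require Import all_boot all_algebra.
Set Implicit Arguments. Unset Strict Implicit. Unset Printing Implicit Defensive.
Import GRing.Theory.
Local Open Scope ring_scope.

Definition division_ring (D : unitRingType) : Prop :=
  forall x : D, x != 0 -> x \is a GRing.unit.

(** Right D-subspaces of the column space U = D^n (D acting on the right:
    u *m c%:M is the column u with every entry multiplied on the right by c). *)
Definition rsubspace (D : pzRingType) (n : nat) (V : 'cV[D]_n -> Prop) : Prop :=
  [/\ V 0,
      (forall u v, V u -> V v -> V (u + v)) &
      (forall u (c : D), V u -> V (u *m (c%:M : 'M[D]_1)))].

Definition fnth (D : pzRingType) (n : nat) (F : seq ('cV[D]_n -> Prop)) j :=
  nth (fun _ => True) F j.

Definition is_flag (D : pzRingType) (n : nat) (F : seq ('cV[D]_n -> Prop)) : Prop :=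
  [/\ (0 < size F)%N,
      (forall j, (j < size F)%N -> rsubspace (fnth F j)),
      (forall v, fnth F 0 v),
      (forall v, fnth F (size F).-1 v -> v = 0) &
      (forall j, (j.+1 < size F)%N -> forall v, fnth F j.+1 v -> fnth F j v)].

Definition flag_stab (D : pzRingType) (n : nat) (F : seq ('cV[D]_n -> Prop))
  (a : 'M[D]_n) : Prop :=
  forall j, (j < size F)%N -> forall v, fnth F j v -> fnth F j (a *m v).

(** The semisimple artinian ring A = prod_{i in I} M_{n_i}(D_i). *)
Definition prodmx (I : finType) (D : I -> pzRingType) (n : I -> nat) : Type :=
  forall i, 'M[D i]_(n i).

Section ProdOps.
Variables (I : finType) (D : I -> pzRingType) (n : I -> nat).
Definition pone : prodmx D n := fun i => 1%:M.
Definition pzero : prodmx D n := fun i => 0.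
Definition padd (a b : prodmx D n) : prodmx D n := fun i => a i + b i.
Definition popp (a : prodmx D n) : prodmx D n := fun i => - a i.
Definition pmul (a b : prodmx D n) : prodmx D n := fun i => a i *m b i.
End ProdOps.

Definition flag_alg (I : finType) (D : I -> pzRingType) (n : I -> nat)
  (F : forall i, seq ('cV[D i]_(n i) -> Prop)) (a : prodmx D n) : Prop :=
  forall i, flag_stab (F i) (a i).

Definition is_flag_subalg (I : finType) (D : I -> pzRingType) (n : I -> nat)
  (S : prodmx D n -> Prop) : Prop :=
  exists F : forall i, seq ('cV[D i]_(n i) -> Prop),
    (forall i, is_flag (F i)) /\ (forall a, S a <-> flag_alg F a).

Definition subring_of (I : finType) (D : I -> pzRingType) (n : I -> nat)
  (B T : prodmx D n -> Prop) : Prop :=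
  [/\ (forall a, B a -> T a), B (pone D n),
      (forall a b, B a -> B b -> B (padd a (popp b))) &
      (forall a b, B a -> B b -> B (pmul a b))].

(** A left S-module structure on M given by act (only its values on S matter). *)
Definition lmod_over (I : finType) (D : I -> pzRingType) (n : I -> nat)
  (S : prodmx D n -> Prop) (M : zmodType) (act : prodmx D n -> M -> M) : Prop :=
  [/\ (forall a x y, S a -> act a (x + y) = act a x + act a y),
      (forall a b x, S a -> S b -> act (padd a b) x = act a x + act b x),
      (forall a b x, S a -> S b -> act (pmul a b) x = act a (act b x)) &
      (forall x, act (pone D n) x = x)].

Definition stable_subgroup (M : zmodType) (ops : (M -> M) -> Prop) (P : M -> Prop) :=
  [/\ P 0, (forall x y, P x -> P y -> P (x + y)), (forall x, P x -> P (- x)) &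
      (forall f, ops f -> forall x, P x -> P (f x))].

Definition simple_for (M : zmodType) (ops : (M -> M) -> Prop) : Prop :=
  (exists x : M, x != 0) /\
  forall P, stable_subgroup ops P -> (forall x, P x -> x = 0) \/ (forall x, P x).

Definition endo_of (I : finType) (D : I -> pzRingType) (n : I -> nat)
  (S : prodmx D n -> Prop) (M : zmodType) (act : prodmx D n -> M -> M) (f : M -> M) :=
  (forall x y, f (x + y) = f x + f y) /\
  (forall a x, S a -> f (act a x) = act a (f x)).

(** B is dense in S: every simple left S-module U is simple as a
    B-End_S(U)-bimodule. *)
Definition dense_in (I : finType) (D : I -> pzRingType) (n : I -> nat)
  (B S : prodmx D n -> Prop) : Prop :=
  forall (M : zmodType) (act : prodmx D n -> M -> M),
    lmod_over S act ->
    simple_for (fun f => exists2 a, S a & f = act a) ->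
    simple_for (fun f => (exists2 b, B b & f = act b) \/ endo_of S act f).

(* Refine each flag to a saturated flag of B-stable subspaces U_0 ⊇ ... ⊇ U_s:
   no B-stable subspace lies strictly between consecutive members.  Its
   stabiliser A' contains B and lies in A(F).  The elements of A' that lower
   the flag form a nilpotent ideal, so they kill every simple A'-module M.
   Modulo that ideal, 1 is a sum of level rank-one maps u ψ (u ∈ U_j and
   ψ U_{j+1} = 0), so some u0 ψ0 acts nontrivially on some x0, and u ↦ (u ψ0) x0
   identifies U_j/U_{j+1} with M.  Through this identification the right
   scalar multiplications by D are A'-endomorphisms of M, so a nonzero
   subgroup P of M stable under B and End(M) yields a B-stable subspace
   strictly above U_{j+1} inside U_j; by saturation it is U_j, i.e. P = M. *)

From mathcomp Require Import all_boot all_algebra boolp zify.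
Set Implicit Arguments. Unset Strict Implicit. Unset Printing Implicit Defensive.
Import GRing.Theory.
Local Open Scope ring_scope.

Section Echelon.
Variables (D : unitRingType) (m : nat).
Hypothesis hD : division_ring D.
Local Notation V := 'cV[D]_m.

Lemma scale_colE (u : V) (d : D) q : (u *m d%:M) q 0 = u q 0 * d.
Proof. by rewrite !mxE big_ord1 !mxE eqxx mulr1n. Qed.

Lemma scale_colN1 (u : V) : u *m (-1)%:M = - u.
Proof. by apply/matrixP=> q k; rewrite ord1 scale_colE mulrN1 !mxE. Qed.

Lemma scale_col0 (u : V) : u *m 0%:M = 0.
Proof. by apply/matrixP=> q k; rewrite ord1 scale_colE mulr0 !mxE. Qed.

Lemma scale_colK (u : V) (c : D) : c != 0 -> u *m c%:M *m c^-1%:M = u.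
Proof. by move=> c0; rewrite -mulmxA -scalar_mxM mulrV ?hD // mulmx1. Qed.

Lemma col_sum_delta (x : V) : x = \sum_(q < m) delta_mx q 0 *m (x q 0)%:M.
Proof.
apply/matrixP=> p k; rewrite ord1 summxE (bigD1 p) //= big1 => [|q nqp].
  by rewrite scale_colE mxE !eqxx mul1r addr0.
by rewrite scale_colE mxE eq_sym (negbTE nqp) mul0r.
Qed.

Section RSubspace.
Variable W : V -> Prop.
Hypothesis hW : rsubspace W.

Lemma rsubspace0 : W 0. Proof. by case: hW. Qed.
Lemma rsubspaceD u v : W u -> W v -> W (u + v). Proof. by case: hW => _ + _; apply. Qed.
Lemma rsubspaceZ u c : W u -> W (u *m c%:M). Proof. by case: hW => _ _; apply. Qed.
Lemma rsubspaceN u : W u -> W (- u).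
Proof. by rewrite -scale_colN1; apply: rsubspaceZ. Qed.
Lemma rsubspaceB u v : W u -> W v -> W (u - v).
Proof. by move=> Wu Wv; apply: rsubspaceD (rsubspaceN Wv). Qed.

Lemma rsubspace_sum (J : Type) (r : seq J) (P : pred J) (f : J -> V) :
  (forall j, P j -> W (f j)) -> W (\sum_(j <- r | P j) f j).
Proof. by move=> Wf; apply: big_ind => //; [exact: rsubspace0 | exact: rsubspaceD]. Qed.

Lemma rsubspaceZV u c : c != 0 -> W (u *m c%:M) -> W u.
Proof. by move=> c0 /(rsubspaceZ c^-1); rewrite scale_colK. Qed.

End RSubspace.

Definition leading (w : V) (p : 'I_m) :=
  w p 0 != 0 /\ forall q : 'I_m, (q < p)%N -> w q 0 = 0.

Definition pivots (W : V -> Prop) := [set p : 'I_m | `[< exists2 w, W w & leading w p >]].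

Definition pdim (W : V -> Prop) := #|pivots W|.

Lemma pivotsS (W W' : V -> Prop) : (forall v, W v -> W' v) -> pivots W \subset pivots W'.
Proof.
move=> WW'; apply/subsetP=> p; rewrite !inE => /asboolP [w Ww lw].
by apply/asboolP; exists w => //; apply: WW'.
Qed.

Lemma pdimS (W W' : V -> Prop) : (forall v, W v -> W' v) -> (pdim W <= pdim W')%N.
Proof. by move=> WW'; apply/subset_leq_card/pivotsS. Qed.

Lemma pdim_max W : (pdim W <= m)%N.
Proof. by rewrite -[m]card_ord max_card. Qed.

(* Elimination: a vector of [W'] is reduced, entry by entry from the top,
   by multiples of vectors of [W] with the same leading positions. *)
Lemma rsubspace_eq_pdim (W W' : V -> Prop) : rsubspace W -> rsubspace W' ->
  (forall v, W v -> W' v) -> (pdim W' <= pdim W)%N -> forall v, W' v -> W v.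
Proof.
move=> hW hW' WW' le_dim.
have eq_piv : pivots W = pivots W' by apply/eqP; rewrite eqEcard pivotsS.
suff reduce k v : W' v -> (forall q : 'I_m, (q < m - k)%N -> v q 0 = 0) -> W v.
  by move=> v W'v; apply: (reduce m) => // q; rewrite subnn.
elim: k v => [|k IHk] v W'v v_top.
  suff -> : v = 0 by apply: rsubspace0.
  by apply/matrixP=> q k; rewrite ord1 mxE v_top // subn0.
have [mk|km] := leqP m k.
  by apply: IHk => // q; rewrite (_ : m - k = 0)%N //; lia.
have pm : (m - k.+1 < m)%N by lia.
pose p := Ordinal pm.
have [vp0|vpn] := eqVneq (v p 0) 0.
  apply: IHk => // q qk; have [qp|pq|/val_inj->] := ltngtP q p => //.
    exact: v_top.
  by move: qk pq => /=; lia.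
have : p \in pivots W' by rewrite inE; apply/asboolP; exists v => //; split.
rewrite -eq_piv inE => /asboolP [w Ww [wp0 w_top]].
pose c := (w p 0)^-1 * v p 0.
suff Wr : W (v - w *m c%:M).
  by rewrite -(subrK (w *m c%:M) v); apply: (rsubspaceD hW Wr); apply: rsubspaceZ.
apply: IHk; first by apply: (rsubspaceB hW' W'v); apply/(rsubspaceZ hW')/WW'.
move=> q qk; rewrite [LHS]mxE [in X in _ + X]mxE scale_colE.
have [qp|pq|/val_inj->] := ltngtP q p.
- by rewrite v_top // w_top // mul0r subr0.
- by move: qk pq => /=; lia.
- by rewrite /c mulrA mulrV ?hD // mul1r subrr.
Qed.

Lemma pdim_proper (W W' : V -> Prop) : rsubspace W -> rsubspace W' ->
  (forall v, W v -> W' v) -> (exists2 v, W' v & ~ W v) -> (pdim W < pdim W')%N.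
Proof.
move=> hW hW' WW' [v W'v nWv]; rewrite ltnNge; apply/negP => le_dim.
exact/nWv/(rsubspace_eq_pdim hW hW').
Qed.

Lemma rsubspace_hyperplane (T : V -> Prop) v : rsubspace T -> ~ T v ->
  exists H : V -> Prop, [/\ rsubspace H, (forall t, T t -> H t), ~ H v &
    forall x, exists h c, H h /\ x = h + v *m c%:M].
Proof.
move=> hT nTv.
pose avoid H := [/\ rsubspace H, forall t, T t -> H t & ~ H v].
pose P k := `[< exists2 H, avoid H & pdim H = k >].
have exP : exists k, P k by exists (pdim T); apply/asboolP; exists T.
have ubP k : P k -> (k <= m)%N by move=> /asboolP [H _ <-]; apply: pdim_max.
case: (ex_maxnP exP ubP) => k /asboolP [H [hH TH nHv] dimH] maxk.
exists H; split => // x; apply: contrapT => nx.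
pose H' y := exists h d, H h /\ y = h + x *m d%:M.
have HH' y : H y -> H' y by exists y, 0; rewrite scale_col0 addr0.
have hH' : rsubspace H'.
  split.
  - exact/HH'/(rsubspace0 hH).
  - move=> _ _ [h [d [Hh ->]]] [h' [d' [Hh' ->]]]; exists (h + h'), (d + d').
    by rewrite raddfD /= mulmxDr addrACA; split => //; apply: rsubspaceD.
  - move=> _ c [h [d [Hh ->]]]; exists (h *m c%:M), (d * c).
    by rewrite mulmxDl scalar_mxM mulmxA; split => //; apply: rsubspaceZ.
have nH'v : ~ H' v.
  move=> [h [d [Hh vE]]]; have [d0|dn] := eqVneq d 0.
    by apply: nHv; rewrite vE d0 scale_col0 addr0.
  apply: nx; exists ((- h) *m d^-1%:M), d^-1; split; first exact/(rsubspaceZ hH)/(rsubspaceN hH).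
  by rewrite -mulmxDl vE addKr scale_colK.
have : (pdim H < pdim H')%N.
  apply: pdim_proper => //; exists x.
    by exists 0, 1; rewrite mulmx1 add0r; split => //; apply: (rsubspace0 hH).
  by move=> Hx; apply: nx; exists x, 0; rewrite scale_col0 addr0.
rewrite dimH ltnNge => /negP; apply; apply: maxk; apply/asboolP; exists H' => //.
by split => // t /TH /HH'.
Qed.

Lemma rsubspace_functional (T : V -> Prop) v : rsubspace T -> ~ T v ->
  exists psi : 'rV[D]_m, (forall t, T t -> psi *m t = 0) /\ psi *m v = 1%:M.
Proof.
move=> hT nTv; have [H [hH TH nHv span]] := rsubspace_hyperplane hT nTv.
have coef q : {c : D | H (delta_mx q 0 - v *m c%:M)}.
  by apply: cid; have [h [c [Hh e]]] := span (delta_mx q 0); exists c; rewrite e addrK.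
pose psi := \row_q sval (coef q).
have Hkey x : H (x - v *m (psi *m x)).
  have -> : x - v *m (psi *m x) =
      \sum_(q < m) (delta_mx q 0 - v *m (sval (coef q))%:M) *m (x q 0)%:M.
    rewrite {1 2}(col_sum_delta x) (mulmx_sumr psi) mulmx_sumr -sumrB.
    apply: eq_bigr => q _; rewrite mulmxBl (mulmxA psi) -colE.
    by rewrite [col q psi]mx11_scalar !mxE -mulmxA.
  by apply: (rsubspace_sum hH) => q _; apply/(rsubspaceZ hH)/(svalP (coef q)).
have scalar_in_H (c : D) : H (v *m c%:M) -> c = 0.
  by move=> Hvc; apply: contrapT => /eqP c0; exact/nHv/(rsubspaceZV hH c0).
exists psi; split.
  move=> t Tt; rewrite [psi *m t]mx11_scalar (scalar_in_H ((psi *m t) 0 0)) ?raddf0 //.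
  have := rsubspaceB hH (TH _ Tt) (Hkey t).
  by rewrite opprB addrC subrK -mx11_scalar.
have := Hkey v; rewrite -{1}[v]mulmx1 (mx11_scalar (psi *m v)) -mulmxBr -raddfB /=.
by move=> /scalar_in_H /eqP; rewrite subr_eq0 => /eqP <-.
Qed.

Definition rsum (L : seq (V * 'rV[D]_m)) : 'M[D]_m := \sum_(l <- L) l.1 *m l.2.

Lemma rsum_cons l L : rsum (l :: L) = l.1 *m l.2 + rsum L.
Proof. by rewrite /rsum big_cons. Qed.

Lemma rsum_mulmx_in (G : V -> Prop) L v : rsubspace G ->
  (forall l, l \in L -> G l.1) -> G (rsum L *m v).
Proof.
move=> hG GL; rewrite /rsum mulmx_suml big_seq; apply: (rsubspace_sum hG) => l lL.
by rewrite -mulmxA [l.2 *m v]mx11_scalar; apply/(rsubspaceZ hG)/GL.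
Qed.

Lemma rsum_mulmx_ker (H : V -> Prop) L v :
  (forall l, l \in L -> forall h, H h -> l.2 *m h = 0) -> H v -> rsum L *m v = 0.
Proof.
move=> HL Hv; rewrite /rsum mulmx_suml big_seq big1 // => l lL.
by rewrite -mulmxA HL // mulmx0.
Qed.

(* Choose [L] maximising the pivot dimension of the subspace on which [rsum L]
   already acts as the identity modulo [H]; a separating functional extends it. *)
Lemma rsum_lift (H G : V -> Prop) : rsubspace H -> rsubspace G ->
  (forall v, H v -> G v) ->
  exists L : seq (V * 'rV[D]_m),
    [/\ forall l, l \in L -> G l.1, forall l, l \in L -> forall h, H h -> l.2 *m h = 0 &
        forall v, G v -> H (rsum L *m v - v)].
Proof.
move=> hH hG HG.
pose good (L : seq (V * 'rV[D]_m)) := (forall l, l \in L -> G l.1) /\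
               (forall l, l \in L -> forall h, H h -> l.2 *m h = 0).
pose T (L : seq (V * 'rV[D]_m)) v := G v /\ H (rsum L *m v - v).
have hT L : rsubspace (T L).
  split.
  - by rewrite /T mulmx0 subr0; split; apply: rsubspace0.
  - move=> u w [Gu Hu] [Gw Hw]; split; first exact: rsubspaceD.
    by rewrite mulmxDr opprD addrACA; apply: rsubspaceD.
  - move=> u c [Gu Hu]; split; first exact: rsubspaceZ.
    by rewrite mulmxA -mulmxBl; apply: rsubspaceZ.
pose P k := `[< exists2 L, good L & pdim (T L) = k >].
have exP : exists k, P k by exists (pdim (T [::])); apply/asboolP; exists [::].
have ubP k : P k -> (k <= m)%N by move=> /asboolP [L _ <-]; apply: pdim_max.
case: (ex_maxnP exP ubP) => _ /asboolP [L [GL HL] <-] maxL.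
exists L; split => //; apply/not_forallP => -[v /not_implyP [Gv nHv]].
have nTv : ~ T L v by case.
have [psi [psiT psiv]] := rsubspace_functional (hT L) nTv.
pose L' := (v - rsum L *m v, psi) :: L.
have rsumL' x : rsum L' *m x = (v - rsum L *m v) *m (psi *m x) + rsum L *m x.
  by rewrite rsum_cons mulmxDl mulmxA.
have goodL' : good L'.
  split=> l; rewrite inE => /orP [/eqP -> /=|]; [|exact: GL| |exact: HL].
    exact/(rsubspaceB hG Gv)/(rsum_mulmx_in _ hG GL).
  move=> h Hh; apply: psiT; split; first exact: HG.
  by rewrite (rsum_mulmx_ker HL Hh) sub0r; apply: rsubspaceN.
have : (pdim (T L) < pdim (T L'))%N.
  apply: pdim_proper => //.
    by move=> t [Gt Ht]; split => //; rewrite rsumL' psiT ?mulmx0 ?add0r.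
  by exists v => //; split => //; rewrite rsumL' psiv mulmx1 subrK subrr; apply: rsubspace0.
by rewrite ltnNge maxL //; apply/asboolP; exists L'.
Qed.

End Echelon.

Section Flags.
Variables (D : unitRingType) (m : nat).
Local Notation V := 'cV[D]_m.

Definition is_flagn (g : nat -> V -> Prop) s :=
  [/\ forall v, g 0%N v, forall v, g s v -> v = 0,
      forall k, (k < s)%N -> forall v, g k.+1 v -> g k v &
      forall k, (k <= s)%N -> rsubspace (g k)].

Definition shifts (g : nat -> V -> Prop) s k (a : 'M[D]_m) :=
  forall j, (j <= s)%N -> forall v, g j v -> g (minn (j + k) s) (a *m v).

Lemma shifts0P g s a :
  shifts g s 0 a <-> forall j, (j <= s)%N -> forall v, g j v -> g j (a *m v).
Proof.
split=> sa j js v gv; last by rewrite addn0 (minn_idPl js); apply: sa.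
by move: (sa j js v gv); rewrite addn0 (minn_idPl js).
Qed.

Section Flag.
Variables (g : nat -> V -> Prop) (s : nat).
Hypothesis hg : is_flagn g s.
Hypothesis hD : division_ring D.

Lemma flag_anti k k' v : (k <= k' <= s)%N -> g k' v -> g k v.
Proof.
case: hg => _ _ dec _ /andP [kk' k's]; elim: k' kk' k's => [|k' IH].
  by rewrite leqn0 => /eqP ->.
rewrite leq_eqVlt => /orP [/eqP -> //|]; rewrite ltnS => kk' k's gv.
by apply: IH => //; [apply: ltnW | apply: dec].
Qed.

Lemma flag_succ k v : (k < s)%N -> g k.+1 v -> g k v.
Proof. by move=> ks; case: hg => _ _ dec _; apply: dec. Qed.

Lemma flag_subspace k : (k <= s)%N -> rsubspace (g k).
Proof. by case: hg => _ _ _; apply. Qed.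

Lemma flag_all v : g 0%N v. Proof. by case: hg => + _ _ _; apply. Qed.
Lemma flag_last_eq0 v : g s v -> v = 0. Proof. by case: hg => _ + _ _; apply. Qed.

Lemma shiftsW k a : shifts g s k a -> shifts g s 0 a.
Proof.
move=> sa; apply/shifts0P => j js v /(sa j js) ga; apply: (flag_anti _ ga); lia.
Qed.

Lemma shifts_zero k : shifts g s k 0.
Proof.
by move=> j js v _; rewrite mul0mx; apply: rsubspace0; apply: flag_subspace; apply: geq_minr.
Qed.

Lemma shifts_one : shifts g s 0 1%:M.
Proof. by apply/shifts0P => j js v; rewrite mul1mx. Qed.

Lemma shiftsD k a b : shifts g s k a -> shifts g s k b -> shifts g s k (a + b).
Proof.
move=> sa sb j js v gv; rewrite mulmxDl.
by apply: rsubspaceD; [apply: flag_subspace; lia | exact: sa | exact: sb].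
Qed.

Lemma shiftsM k l a b : shifts g s k a -> shifts g s l b -> shifts g s (l + k) (a *m b).
Proof.
move=> sa sb j js v /(sb j js) /(sa _ (geq_minr _ _)); rewrite mulmxA.
by have -> : minn (minn (j + l) s + k) s = minn (j + (l + k)) s by lia.
Qed.

Lemma shifts_top_eq0 k a : (s <= k)%N -> shifts g s k a -> a = 0.
Proof.
move=> sk sa; apply/matrixP=> p q; rewrite mxE.
have := sa 0%N (leq0n s) _ (flag_all (delta_mx q 0)).
rewrite add0n (minn_idPr sk) => /flag_last_eq0 /matrixP /(_ p 0).
by rewrite -colE !mxE.
Qed.

Definition level_rank_one j (u : V) (psi : 'rV[D]_m) :=
  [/\ (j < s)%N, g j u & forall h, g j.+1 h -> psi *m h = 0].

Lemma shifts_rank_one j k u psi : (j + k <= s)%N -> g (j + k) u ->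
  (forall h, g j.+1 h -> psi *m h = 0) -> shifts g s k (u *m psi).
Proof.
move=> jks gu psi0 t ts v gv; rewrite -mulmxA.
have [tj|jt] := leqP t j.
  rewrite [psi *m v]mx11_scalar; apply: rsubspaceZ; first by apply: flag_subspace; apply: geq_minr.
  by apply: (flag_anti _ gu); lia.
rewrite psi0 ?mulmx0; last by apply: (flag_anti _ gv); lia.
by apply: rsubspace0; apply: flag_subspace; apply: geq_minr.
Qed.

Lemma level_rank_one_shifts j u psi : level_rank_one j u psi -> shifts g s 0 (u *m psi).
Proof. by case=> js gu psi0; apply: (@shifts_rank_one j 0); rewrite ?addn0 // ltnW. Qed.

(* Concatenate, level by level, the lifts given by [rsum_lift]. *)
Lemma level_decomposition : exists L : seq (V * 'rV[D]_m),
  (forall l, l \in L -> exists j, level_rank_one j l.1 l.2) /\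
  shifts g s 1 (1%:M - rsum L).
Proof.
suff [L [lvlL lowL]] : exists L : seq (V * 'rV[D]_m),
    (forall l, l \in L -> exists j, level_rank_one j l.1 l.2) /\
    forall k, (k < s)%N -> forall v, g k v -> g k.+1 (v - rsum L *m v).
  exists L; split => // j js v gv; rewrite mulmxBl mul1mx.
  have [jlt|] := ltnP j s; first by rewrite addn1 (minn_idPl jlt); exact: lowL.
  move=> sj; move: gv; have -> : j = s by apply/eqP; rewrite eqn_leq js sj.
  move=> /flag_last_eq0 ->; rewrite mulmx0 subr0.
  by apply: rsubspace0; apply: flag_subspace; apply: geq_minr.
suff: forall t, (t <= s)%N -> exists L : seq (V * 'rV[D]_m),
    (forall l, l \in L -> exists2 j, (j < t)%N & level_rank_one j l.1 l.2) /\
    forall k, (k < t)%N -> forall v, g k v -> g k.+1 (v - rsum L *m v).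
  move=> /(_ s (leqnn s)) [L [lvlL lowL]].
  by exists L; split => // l /lvlL [j _]; exists j.
elim=> [_|t IHt ts]; first by exists [::].
have [L [lvlL lowL]] := IHt (ltnW ts).
have [Lt [gLt kerLt liftLt]] :=
  rsum_lift hD (flag_subspace ts) (flag_subspace (ltnW ts)) (fun v => flag_succ ts).
exists (Lt ++ L); split.
  move=> l; rewrite mem_cat => /orP [lLt|/lvlL [j jt lvl]]; last by exists j => //; apply: ltnW.
  by exists t => //; split; [|exact: gLt|exact: kerLt].
move=> k; rewrite ltnS leq_eqVlt => /orP [/eqP ->|kt] v gv;
  rewrite /rsum big_cat mulmxDl -/(rsum Lt) -/(rsum L).
  have kerL l : l \in L -> forall h, g t h -> l.2 *m h = 0.
    by move=> /lvlL [j jt [_ _ psi0]] h ght; apply: psi0; apply: (flag_anti _ ght); lia.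
  rewrite (rsum_mulmx_ker kerL gv) addr0 -opprB.
  exact/(rsubspaceN (flag_subspace ts))/liftLt.
have sk : rsubspace (g k.+1) by apply: flag_subspace; lia.
rewrite opprD addrA addrAC; apply: (rsubspaceB sk (lowL k kt v gv)).
by apply: (flag_anti _ (rsum_mulmx_in _ (flag_subspace (ltnW ts)) gLt)); lia.
Qed.
End Flag.
End Flags.

Section StableFlags.
Variables (D : unitRingType) (m : nat) (ops : 'M[D]_m -> Prop).
Hypothesis hD : division_ring D.
Local Notation V := 'cV[D]_m.

Definition ops_stable (W : V -> Prop) := forall a, ops a -> forall v, W v -> W (a *m v).

Definition stable_flag (g : nat -> V -> Prop) s :=
  is_flagn g s /\ forall k, (k <= s)%N -> ops_stable (g k).

Definition saturated (g : nat -> V -> Prop) s :=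
  forall k, (k < s)%N -> forall W, rsubspace W -> ops_stable W ->
    (forall v, g k.+1 v -> W v) -> (forall v, W v -> g k v) ->
    (forall v, W v -> g k.+1 v) \/ (forall v, g k v -> W v).

Definition refines (g' : nat -> V -> Prop) s' (g : nat -> V -> Prop) s :=
  forall a, shifts g' s' 0 a -> shifts g s 0 a.

Definition insert_level (g : nat -> V -> Prop) k (W : V -> Prop) t :=
  if (t <= k)%N then g t else if t == k.+1 then W else g t.-1.

Lemma insert_level_lo g k W t : (t <= k)%N -> insert_level g k W t = g t.
Proof. by rewrite /insert_level => ->. Qed.

Lemma insert_level_mid g k W : insert_level g k W k.+1 = W.
Proof. by rewrite /insert_level ltnn eqxx. Qed.

Lemma insert_level_hi g k W t : (k.+1 < t)%N -> insert_level g k W t = g t.-1.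
Proof. by rewrite /insert_level => kt; rewrite ifF ?ifF //; lia. Qed.

Definition pdims (g : nat -> V -> Prop) s :=
  #|[set x : 'I_m.+1 | [exists k : 'I_s.+1, pdim (g k) == x]]|.

Lemma pdims_max g s : (pdims g s <= m.+1)%N.
Proof. by rewrite -[m.+1]card_ord max_card. Qed.

Section Insert.
Variables (g : nat -> V -> Prop) (s k : nat) (W : V -> Prop).
Hypotheses (ks : (k < s)%N) (hg : stable_flag g s).
Hypotheses (hW : rsubspace W) (sW : ops_stable W).
Hypotheses (gW : forall v, g k.+1 v -> W v) (Wg : forall v, W v -> g k v).
Let hgf : is_flagn g s := hg.1.

Lemma insert_level_refines : refines (insert_level g k W) s.+1 g s.
Proof.
move=> a /shifts0P sa; apply/shifts0P => t ts v.
have [tk|kt] := leqP t k; first by have := sa t (leqW ts) v; rewrite insert_level_lo //; apply.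
by have := sa t.+1 ts v; rewrite insert_level_hi //; apply.
Qed.

Lemma insert_level_cases t : (t <= s.+1)%N ->
  insert_level g k W t = W \/ exists2 t', (t' <= s)%N & insert_level g k W t = g t'.
Proof.
move=> ts; have [tk|kt|->] := ltngtP t k.+1.
- by right; exists t; rewrite ?insert_level_lo //; lia.
- by right; exists t.-1; rewrite ?insert_level_hi //; lia.
- by left; rewrite insert_level_mid.
Qed.

Lemma insert_level_flag : stable_flag (insert_level g k W) s.+1.
Proof.
split; last by move=> t /insert_level_cases [|[t' t's]] ->; last exact: hg.2.
split.
- by move=> v; rewrite insert_level_lo //; exact: (flag_all hgf).
- by move=> v; rewrite insert_level_hi //; apply: (flag_last_eq0 hgf).
- move=> t ts v; have [tk|kt|->] := ltngtP t k.
  + by rewrite !insert_level_lo //; [apply: (flag_succ hgf) | ]; lia.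
  + rewrite [insert_level _ _ _ t.+1]insert_level_hi //=.
    have [->|ne] := eqVneq t k.+1; first by rewrite insert_level_mid; apply: gW.
    have tE : t = t.-1.+1 by lia.
    rewrite insert_level_hi; last lia.
    by rewrite {1}tE; apply: (flag_succ hgf); lia.
  + by rewrite insert_level_mid insert_level_lo //; apply: Wg.
- by move=> t /insert_level_cases [|[t' t's]] ->; last exact: (flag_subspace hgf).
Qed.

Lemma insert_level_pdims : (exists2 v, W v & ~ g k.+1 v) -> (exists2 v, g k v & ~ W v) ->
  (pdims g s < pdims (insert_level g k W) s.+1)%N.
Proof.
move=> WnotLow gnotW.
have ltLowW : (pdim (g k.+1) < pdim W)%N.
  by apply: (pdim_proper hD) => //; apply: (flag_subspace hgf).
have ltWg : (pdim W < pdim (g k))%N.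
  by apply: (pdim_proper hD) => //; apply: (flag_subspace hgf); lia.
apply: proper_card; apply/properP; split.
  apply/subsetP => x; rewrite !inE => /existsP [t /eqP <-].
  have [tk|kt] := leqP t k.
    apply/existsP; exists (inord t); rewrite inordK ?insert_level_lo //.
    by move: (ltn_ord t); lia.
  apply/existsP; exists (inord t.+1); rewrite inordK ?insert_level_hi //.
  by move: (ltn_ord t); lia.
have pWm : (pdim W < m.+1)%N by rewrite ltnS pdim_max.
exists (Ordinal pWm); rewrite !inE.
  by apply/existsP; exists (inord k.+1); rewrite inordK ?insert_level_mid //; lia.
apply/existsP => -[t /eqP /= e]; have t_le_s := ltn_ord t.
have [tk|kt] := leqP t k.
  suff : (pdim (g k) <= pdim (g t))%N by lia.
  by apply: pdimS => v; apply: (flag_anti hgf); lia.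
suff : (pdim (g t) <= pdim (g k.+1))%N by lia.
by apply: pdimS => v; apply: (flag_anti hgf); lia.
Qed.

End Insert.

Lemma refines_trans g1 s1 g2 s2 g3 s3 :
  refines g1 s1 g2 s2 -> refines g2 s2 g3 s3 -> refines g1 s1 g3 s3.
Proof. by move=> r12 r23 a /r12 /r23. Qed.

(* A stable refinement with the largest number of distinct pivot dimensions
   admits no further insertion, so it is saturated. *)
Lemma saturated_refinement g s : stable_flag g s ->
  exists g' s', [/\ stable_flag g' s', saturated g' s' & refines g' s' g s].
Proof.
move=> hg.
pose P t := `[< exists g' s', [/\ stable_flag g' s', refines g' s' g s & pdims g' s' = t] >].
have exP : exists t, P t by exists (pdims g s); apply/asboolP; exists g, s; split => // a.
have ubP t : P t -> (t <= m.+1)%N by move=> /asboolP [g' [s' [_ _ <-]]]; apply: pdims_max.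
case: (ex_maxnP exP ubP) => _ /asboolP [g' [s' [hg' rg' <-]]] maxg'.
exists g', s'; split => // k ks W hW sW gW Wg; apply: contrapT => /not_orP [nWlow ngW].
have /existsNP [v /not_implyP [Wv nlv]] := nWlow.
have /existsNP [w /not_implyP [gw nWw]] := ngW.
have := insert_level_pdims ks hg' hW gW Wg (ex_intro2 _ _ v Wv nlv) (ex_intro2 _ _ w gw nWw).
rewrite ltnNge maxg' //; apply/asboolP; exists (insert_level g' k W), s'.+1; split => //.
  exact: insert_level_flag.
by apply: refines_trans rg'; apply: insert_level_refines.
Qed.

End StableFlags.

Section Product.
Variables (I : finType) (D : I -> pzRingType) (n : I -> nat).
Local Notation A := (prodmx D n).

Definition pinj i (a : 'M[D i]_(n i)) : A := fun i' =>
  if i =P i' is ReflectT e then eq_rect i (fun k => 'M[D k]_(n k)) a i' e else 0.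

Lemma pinj_id i (a : 'M[D i]_(n i)) : pinj a i = a.
Proof. by rewrite /pinj; case: eqP => // e; rewrite (eq_irrelevance e (erefl i)). Qed.

Lemma pinj_neq i i' (a : 'M[D i]_(n i)) : i != i' -> pinj a i' = 0.
Proof. by rewrite /pinj; case: eqP. Qed.

Lemma pinjE i (a : 'M[D i]_(n i)) (f : A) :
  f i = a -> (forall i', i != i' -> f i' = 0) -> pinj a = f.
Proof.
move=> fi f0; apply: functional_extensionality_dep => k.
have [<-|ne] := eqVneq i k; first by rewrite pinj_id fi.
by rewrite pinj_neq // f0.
Qed.

Lemma pinj0 i : pinj (0 : 'M[D i]_(n i)) = pzero D n.
Proof. by apply: pinjE. Qed.

Lemma pinjD i (a b : 'M[D i]_(n i)) : pinj (a + b) = padd (pinj a) (pinj b).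
Proof.
by apply: pinjE => [|k ne]; rewrite /padd ?pinj_id ?pinj_neq ?addr0.
Qed.

Lemma pmul_pinjl i (c : A) (a : 'M[D i]_(n i)) : pmul c (pinj a) = pinj (c i *m a).
Proof.
by symmetry; apply: pinjE => [|k ne]; rewrite /pmul ?pinj_id ?pinj_neq ?mulmx0.
Qed.

Lemma pcomponents_ind (P : A -> Prop) (a : A) : P (pzero D n) ->
  (forall b c, P b -> P c -> P (padd b c)) -> (forall i, P (pinj (a i))) -> P a.
Proof.
move=> P0 PD Pa; pose part (l : seq I) : A := fun i => if i \in l then a i else 0.
suff Ppart l : uniq l -> P (part l).
  have -> : a = part (enum I) by apply: functional_extensionality_dep => i; rewrite /part mem_enum.
  exact/Ppart/enum_uniq.
elim: l => [_|i l IHl /= /andP [il ul]].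
  by have -> : part [::] = pzero D n by apply: functional_extensionality_dep.
have -> : part (i :: l) = padd (pinj (a i)) (part l).
  apply: functional_extensionality_dep => k; rewrite /padd /part inE.
  have [<-|ne] := eqVneq i k; first by rewrite pinj_id (negbTE il) addr0.
  by rewrite pinj_neq // add0r.
exact/PD/IHl.
Qed.

Definition component_ops (B : A -> Prop) i (a : 'M[D i]_(n i)) := exists2 b, B b & a = b i.

End Product.
Arguments component_ops {I D n} B i a.

Section Density.
Variables (I : finType) (D : I -> unitRingType) (n : I -> nat).
Hypothesis hD : forall i, division_ring (D i).
Arguments hD : clear implicits.
Variables (g : forall i, nat -> 'cV[D i]_(n i) -> Prop) (s : I -> nat).
Arguments g : clear implicits.
Hypothesis hg : forall i : I, is_flagn (g i) (s i).
Local Notation A := (prodmx D n).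

Definition pshifts k (a : A) := forall i, shifts (g i) (s i) k (a i).
Local Notation A' := (pshifts 0).

Lemma pshiftsW k a : pshifts k a -> A' a.
Proof. by move=> sa i; apply: (shiftsW (hg i)); apply: sa. Qed.

Lemma pshifts_zero k : pshifts k (pzero D n).
Proof. by move=> i; apply: (shifts_zero (hg i)). Qed.

Lemma pshifts_one : A' (pone D n).
Proof. by move=> i; apply: shifts_one. Qed.

Lemma pshiftsD k a b : pshifts k a -> pshifts k b -> pshifts k (padd a b).
Proof. by move=> sa sb i; apply: (shiftsD (hg i)); [apply: sa | apply: sb]. Qed.

Lemma pshiftsM k l a b : pshifts k a -> pshifts l b -> pshifts (l + k) (pmul a b).
Proof. by move=> sa sb i; apply: shiftsM. Qed.

Lemma pshifts_pinj i k (a : 'M[D i]_(n i)) : shifts (g i) (s i) k a -> pshifts k (pinj a).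
Proof.
move=> sa i'; have [<-|ne] := eqVneq i i'; first by rewrite pinj_id.
by rewrite pinj_neq //; apply: (shifts_zero (hg i')).
Qed.

Lemma pshifts_top_eq0 k a : (forall i, s i <= k)%N -> pshifts k a -> a = pzero D n.
Proof.
move=> sk sa; apply: functional_extensionality_dep => i.
by apply: (shifts_top_eq0 (hg i) (sk i)); apply: sa.
Qed.

Lemma rank_one_pshifts i j k (u : 'cV[D i]_(n i)) psi : (j + k <= s i)%N -> g i (j + k) u ->
  (forall h, g i j.+1 h -> psi *m h = 0) -> pshifts k (pinj (u *m psi)).
Proof. by move=> jks gu psi0; apply: pshifts_pinj; exact (shifts_rank_one (hg i) jks gu psi0). Qed.

Section Module.
Variables (M : zmodType) (act : A -> M -> M).
Hypothesis hact : lmod_over A' act.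
Hypothesis hsimple : simple_for (fun f => exists2 a, A' a & f = act a).

Lemma actD a x y : A' a -> act a (x + y) = act a x + act a y.
Proof. by case: hact => + _ _ _; apply. Qed.

Lemma act_padd a b x : A' a -> A' b -> act (padd a b) x = act a x + act b x.
Proof. by case: hact => _ + _ _; apply. Qed.

Lemma act_pmul a b x : A' a -> A' b -> act (pmul a b) x = act a (act b x).
Proof. by case: hact => _ _ + _; apply. Qed.

Lemma act_pone x : act (pone D n) x = x.
Proof. by case: hact => _ _ _; apply. Qed.

Lemma act0 a : A' a -> act a 0 = 0.
Proof. by move=> sa; apply: (@addrI _ (act a 0)); rewrite addr0 -actD ?addr0. Qed.

Lemma actN a x : A' a -> act a (- x) = - act a x.
Proof. by move=> sa; apply/eqP; rewrite -subr_eq0 opprK -actD // addNr act0. Qed.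

Lemma act_pzero x : act (pzero D n) x = 0.
Proof.
have pzeroD : padd (pzero D n) (pzero D n) = pzero D n.
  by apply: functional_extensionality_dep => i; rewrite /padd /pzero addr0.
apply: (@addrI _ (act (pzero D n) x)).
by rewrite addr0 -act_padd ?pzeroD //; apply: pshifts_zero.
Qed.

Lemma simple_sub_all (P : M -> Prop) :
  P 0 -> (forall x y, P x -> P y -> P (x + y)) -> (forall x, P x -> P (- x)) ->
  (forall a x, A' a -> P x -> P (act a x)) -> (exists2 x, P x & x != 0) -> forall x, P x.
Proof.
move=> P0 PD PN Pact [x Px x0]; case: hsimple => _ /(_ P) [].
- by split => // f [a sa ->] y Py; apply: Pact.
- by move=> Pzero; move: x0; rewrite (Pzero x Px) eqxx.
- done.
Qed.

(* The elements of [pshifts 1] form a nilpotent ideal of [A'], which therefore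
   annihilates the simple module: take [x] = [a x0] with [a] in [pshifts k],
   [k] maximal, and [x] nonzero. *)
Lemma act_pshifts1 a x : pshifts 1 a -> act a x = 0.
Proof.
pose Z (x : M) := forall a, pshifts 1 a -> act a x = 0.
suff allZ : forall x, Z x by move=> sa; apply: allZ.
apply: simple_sub_all.
- by move=> b /pshiftsW /act0.
- by move=> y z Zy Zz b sb; rewrite actD ?Zy ?Zz ?addr0 //; apply: pshiftsW sb.
- by move=> y Zy b sb; rewrite actN ?Zy ?oppr0 //; apply: pshiftsW sb.
- by move=> c y sc Zy b sb; rewrite -act_pmul ?Zy //; [apply: pshiftsM sb sc | apply: pshiftsW sb].
have [x0 nx0] : exists x0 : M, x0 != 0 by case: hsimple.
pose P k := `[< exists2 a, pshifts k a & act a x0 != 0 >].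
have exP : exists k, P k.
  by exists 0%N; apply/asboolP; exists (pone D n); rewrite ?act_pone //; apply: pshifts_one.
pose smax := (\max_i s i)%N.
have ubP k : P k -> (k <= smax)%N.
  move=> /asboolP [b sb]; apply: contraNleq => smax_k.
  rewrite (pshifts_top_eq0 _ sb) ?act_pzero // => i.
  by apply: leq_trans (ltnW smax_k); apply: leq_bigmax.
case: (ex_maxnP exP ubP) => k /asboolP [b sb nz] maxk.
exists (act b x0) => // c sc; apply: contraTeq nz => nzc; apply/negP => _.
suff : P k.+1 by move/maxk; rewrite ltnn.
apply/asboolP; exists (pmul c b); first by rewrite -addn1; apply: pshiftsM.
by rewrite act_pmul //; [apply: pshiftsW sc | apply: pshiftsW sb].
Qed.

(* Otherwise [1] would act as zero: by [level_decomposition] it is a sum of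
   level rank-one elements plus an element of [pshifts 1]. *)
Lemma exists_acting_level_rank_one : exists i j u psi,
  level_rank_one (g i) (s i) j u psi /\ exists x, act (pinj (u *m psi)) x != 0.
Proof.
apply: contrapT => none.
have act_level0 i j u psi x :
    level_rank_one (g i) (s i) j u psi -> act (pinj (u *m psi)) x = 0.
  move=> lvl; apply: contrapT => /eqP nz; apply: none.
  by exists i, j, u, psi; split => //; exists x.
pose K (a : A) := A' a /\ forall x, act a x = 0.
have K_padd b c : K b -> K c -> K (padd b c).
  by move=> [sb Kb] [sc Kc]; split; [apply: pshiftsD | move=> x; rewrite act_padd // Kb Kc addr0].
have K_pzero : K (pzero D n) by split; [apply: pshifts_zero | apply: act_pzero].
pose L i := sval (cid (level_decomposition (hg i) (hD i))).
have Lspec i := svalP (cid (level_decomposition (hg i) (hD i))).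
pose e : A := fun i => rsum (L i).
have Ke : K e.
  apply: pcomponents_ind => // i; have [lvlL _] := Lspec i.
  suff [] : shifts (g i) (s i) 0 (rsum (L i)) /\ K (pinj (rsum (L i))) by [].
  rewrite /rsum big_seq; apply: (big_ind (fun a => shifts (g i) (s i) 0 a /\ K (pinj a))).
  - by split; [apply: (shifts_zero (hg i)) | rewrite pinj0].
  - by move=> a b [sa Ka] [sb Kb]; split; [apply: (shiftsD (hg i)) | rewrite pinjD; apply: K_padd].
  move=> l /lvlL [j lvl]; have sl := level_rank_one_shifts (hg i) lvl.
  by split => //; split; [apply: pshifts_pinj | move=> x; apply: act_level0 lvl].
have low : pshifts 1 (fun i => 1%:M - e i) by move=> i; have [_] := Lspec i.
have [x0 nx0] : exists x0 : M, x0 != 0 by case: hsimple.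
have pone_split : pone D n = padd e (fun i => 1%:M - e i).
  by apply: functional_extensionality_dep => i; rewrite /pone /padd addrC subrK.
move: nx0; rewrite -(act_pone x0) pone_split act_padd ?(act_pshifts1 _ low); last first.
- exact: pshiftsW low.
- exact: Ke.1.
by rewrite Ke.2 addr0 eqxx.
Qed.

Section Coordinate.
Variables (i : I) (j : nat) (u0 : 'cV[D i]_(n i)) (psi0 : 'rV[D i]_(n i)) (x0 : M).
Hypothesis hlvl : level_rank_one (g i) (s i) j u0 psi0.
Hypothesis hx0 : act (pinj (u0 *m psi0)) x0 != 0.

Let js : (j < s i)%N. Proof. by case: hlvl. Qed.
Let psi0_low h : g i j.+1 h -> psi0 *m h = 0. Proof. by case: hlvl => _ _; apply. Qed.
Let gj : rsubspace (g i j). Proof. exact (flag_subspace (hg i) (ltnW js)). Qed.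
Let gj1 : rsubspace (g i j.+1). Proof. exact (flag_subspace (hg i) js). Qed.

Lemma level_pshifts u phi :
  g i j u -> (forall h, g i j.+1 h -> phi *m h = 0) -> A' (pinj (u *m phi)).
Proof. by move=> gu phi0; apply: (@rank_one_pshifts i j 0); rewrite ?addn0 // ltnW. Qed.

Lemma act_level_low u phi x :
  g i j.+1 u -> (forall h, g i j.+1 h -> phi *m h = 0) -> act (pinj (u *m phi)) x = 0.
Proof.
by move=> gu phi0; apply: act_pshifts1; apply: (@rank_one_pshifts i j 1); rewrite ?addn1.
Qed.

(* [coord] identifies [g i j / g i j.+1] with the simple module. *)
Definition coord u := act (pinj (u *m psi0)) x0.

Lemma coordD u w : g i j u -> g i j w -> coord (u + w) = coord u + coord w.
Proof. by move=> gu gw; rewrite /coord mulmxDl pinjD act_padd //; apply: level_pshifts. Qed.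

Lemma coord0 : coord 0 = 0.
Proof. by rewrite /coord mul0mx pinj0 act_pzero. Qed.

Lemma coordB u w : g i j u -> g i j w -> coord (u - w) = coord u - coord w.
Proof.
move=> gu gw; have guw := rsubspaceB gj gu gw.
by rewrite -{2}(subrK w u) (coordD guw gw) addrK.
Qed.

Lemma coord_act c u : A' c -> g i j u -> act c (coord u) = coord (c i *m u).
Proof. by move=> sc gu; rewrite /coord -act_pmul ?pmul_pinjl ?mulmxA //; apply: level_pshifts. Qed.

Lemma coord_low u : g i j.+1 u -> coord u = 0.
Proof. by move=> gu; apply: act_level_low. Qed.

Lemma coord_onto x : exists2 u, g i j u & coord u = x.
Proof.
pose Im x := exists2 u, g i j u & coord u = x.
apply: (simple_sub_all (P := Im)); last by exists (coord u0) => //; exists u0 => //; case: hlvl.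
- by exists 0; [apply: rsubspace0 | rewrite coord0].
- by move=> _ _ [u gu <-] [w gw <-]; exists (u + w); [apply: rsubspaceD | apply: coordD].
- move=> _ [u gu <-]; exists (- u); first exact: rsubspaceN.
  by rewrite -[- u]sub0r coordB ?coord0 ?sub0r //; apply: rsubspace0.
- move=> c _ sc [u gu <-]; exists (c i *m u); last by rewrite coord_act.
  by have /shifts0P := sc i; apply => //; apply: ltnW.
Qed.

Lemma coord_ker u : g i j u -> coord u = 0 -> g i j.+1 u.
Proof.
move=> gu cu0; apply: contrapT => nlow.
have [psi [psi_low psiu]] := rsubspace_functional (hD i) gj1 nlow.
have gu0 : g i j u0 by case: hlvl.
have sc := level_pshifts gu0 psi_low.
have : coord u0 = act (pinj (u0 *m psi)) (coord u).
  by rewrite coord_act // pinj_id -mulmxA psiu mulmx1.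
by rewrite cu0 act0 // => /eqP; apply/negP.
Qed.

Lemma coord_scale u w d : g i j u -> g i j w -> coord u = coord w ->
  coord (u *m d%:M) = coord (w *m d%:M).
Proof.
move=> gu gw cuw; apply/eqP; rewrite -subr_eq0 -coordB; try exact: rsubspaceZ.
rewrite -mulmxBl coord_low //; apply: rsubspaceZ gj1 _ _ _; apply: coord_ker.
  exact: rsubspaceB.
by rewrite coordB // cuw subrr.
Qed.

Definition coord_pre x := s2val (cid2 (coord_onto x)).

Lemma coord_preP x : g i j (coord_pre x) /\ coord (coord_pre x) = x.
Proof. by rewrite /coord_pre; case: cid2. Qed.

Definition coord_scaling d x := coord (coord_pre x *m d%:M).

Lemma coord_scalingE d u : g i j u -> coord_scaling d (coord u) = coord (u *m d%:M).
Proof. by move=> gu; have [gp cp] := coord_preP (coord u); apply: coord_scale. Qed.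

Lemma coord_scaling_endo d : endo_of A' act (coord_scaling d).
Proof.
have gZ u : g i j u -> g i j (u *m d%:M) by apply: rsubspaceZ.
split=> [x y|a x sa].
  have [u gu <-] := coord_onto x; have [w gw <-] := coord_onto y.
  have guw := rsubspaceD gj gu gw.
  by rewrite -coordD // !coord_scalingE // mulmxDl (coordD (gZ _ gu) (gZ _ gw)).
have [u gu <-] := coord_onto x.
have gau : g i j (a i *m u) by have /shifts0P := sa i; apply => //; apply: ltnW.
by rewrite coord_act // !coord_scalingE // coord_act ?mulmxA //; apply: gZ.
Qed.

Variable B : A -> Prop.
Hypothesis hBA : forall b, B b -> A' b.
Hypothesis hstable : forall k, (k <= s i)%N -> ops_stable (component_ops B i) (g i k).
Hypothesis hsat : saturated (component_ops B i) (g i) (s i).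

(* The vectors [u] whose level rank-one elements map the module into [P] form a
   [B]-stable subspace between [g i j.+1] and [g i j]; it contains a preimage of
   [p] because the endomorphisms include the right scalings [coord_scaling]. *)
Lemma stable_subgroup_all (P : M -> Prop) :
  stable_subgroup (fun f => (exists2 b, B b & f = act b) \/ endo_of A' act f) P ->
  (exists2 p, P p & p != 0) -> forall x, P x.
Proof.
case=> P0 PD PN Pops [p Pp p0].
pose SP u := g i j u /\ forall phi x, (forall h, g i j.+1 h -> phi *m h = 0) ->
  P (act (pinj (u *m phi)) x).
have hSP : rsubspace SP.
  split.
  - by split; [apply: rsubspace0 | move=> phi x _; rewrite mul0mx pinj0 act_pzero].
  - move=> u w [gu Pu] [gw Pw]; split; first exact (rsubspaceD gj gu gw).
    move=> phi x phi0; rewrite mulmxDl pinjD act_padd; try exact: level_pshifts.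
    exact: PD (Pu _ _ phi0) (Pw _ _ phi0).
  - move=> u c [gu Pu]; split; first exact (rsubspaceZ gj c gu).
    by move=> phi x phi0; rewrite -mulmxA; apply: Pu => h gh; rewrite -mulmxA phi0 // mulmx0.
have sSP : ops_stable (component_ops B i) SP.
  move=> _ [b Bb ->] u [gu Pu]; split; first by apply: (hstable (ltnW js)) => //; exists b.
  move=> phi x phi0; rewrite -mulmxA -pmul_pinjl act_pmul; last 2 first.
  - exact: hBA.
  - exact: level_pshifts.
  by apply: Pops; [left; exists b | apply: Pu].
have lowSP u : g i j.+1 u -> SP u.
  move=> gu; split; first exact (flag_succ (hg i) js gu).
  by move=> phi x phi0; rewrite act_level_low.
have [u gu pE] := coord_onto p.
have SPu : SP u.
  split => // phi x phi0; have [w gw <-] := coord_onto x.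
  have sc := level_pshifts gu phi0.
  rewrite coord_act // pinj_id -mulmxA [phi *m w]mx11_scalar -coord_scalingE // pE.
  by apply: Pops => //; right; apply: coord_scaling_endo.
have [low|all] := hsat js hSP sSP lowSP (fun v (h : SP v) => h.1).
  by move: p0; rewrite -pE coord_low ?eqxx //; apply: low.
by move=> x; have [w gw <-] := coord_onto x; have [_ Pw] := all w gw; apply: Pw; apply: psi0_low.
Qed.

End Coordinate.

End Module.

Theorem pshifts_dense (B : A -> Prop) :
  (forall i k, (k <= s i)%N -> ops_stable (component_ops B i) (g i k)) ->
  (forall i, saturated (component_ops B i) (g i) (s i)) -> dense_in B A'.
Proof.
move=> hstable hsat M act hact hsimple; split; first by case: hsimple.
have hBA b : B b -> A' b.
  by move=> Bb i; apply/shifts0P => k ks v; apply: hstable => //; exists b.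
move=> P hP; have [[p Pp p0]|none] := pselect (exists2 p, P p & p != 0); last first.
  by left=> x Px; apply: contrapT => /eqP x0; apply: none; exists x.
right; have [i [j [u [psi [lvl [x nz]]]]]] := exists_acting_level_rank_one hact hsimple.
apply: (@stable_subgroup_all M act hact hsimple i j u psi x lvl nz B hBA (hstable i) (hsat i) P hP).
by exists p.
Qed.

End Density.

Section ListFlags.
Variables (D : unitRingType) (m : nat).
Local Notation V := 'cV[D]_m.

Lemma flag_stab_fnth (F : seq (V -> Prop)) a : (0 < size F)%N ->
  flag_stab F a <-> shifts (fnth F) (size F).-1 0 a.
Proof.
move=> szF; rewrite shifts0P; have jE j : (j < size F)%N = (j <= (size F).-1)%N.
  by rewrite -(prednK szF).
by split=> st j js; apply: st; rewrite ?jE // -jE.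
Qed.

Lemma is_flagn_fnth (F : seq (V -> Prop)) : is_flag F -> is_flagn (fnth F) (size F).-1.
Proof.
case=> szF sub F0 Flast Fdec; split => // k ks; first by apply: Fdec; rewrite -(prednK szF) ltnS.
by apply: sub; rewrite -(prednK szF) ltnS.
Qed.

Lemma flag_stab_mkseq (g : nat -> V -> Prop) s a :
  flag_stab (mkseq g s.+1) a <-> shifts g s 0 a.
Proof.
rewrite shifts0P /flag_stab size_mkseq.
by split=> st j js v; move: (st j js v); rewrite /fnth nth_mkseq.
Qed.

Lemma is_flag_mkseq (g : nat -> V -> Prop) s : is_flagn g s -> is_flag (mkseq g s.+1).
Proof.
case=> g0 glast gdec gsub; rewrite /is_flag /fnth size_mkseq.
split=> // [j js|v|j js v].
- by rewrite nth_mkseq //; apply: gsub.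
- by rewrite nth_mkseq //; apply: glast.
- by rewrite !nth_mkseq //; [apply: gdec | apply: ltnW].
Qed.

End ListFlags.

Theorem lemma1p5 (I : finType) (D : I -> unitRingType) (n : I -> nat)
  (hD : forall i, division_ring (D i)) (hn : forall i, (0 < n i)%N)
  (F : forall i, seq ('cV[D i]_(n i) -> Prop)) (hF : forall i, is_flag (F i))
  (B : prodmx D n -> Prop) (hB : subring_of B (flag_alg F)) :
  exists A' : prodmx D n -> Prop,
    [/\ is_flag_subalg A',
        (forall a, B a -> A' a),
        (forall a, A' a -> flag_alg F a) &
        dense_in B A'].
Proof.
have szF i : (0 < size (F i))%N by case: (hF i).
have stableF i : stable_flag (component_ops B i) (fnth (F i)) (size (F i)).-1.
  split=> [|k ks _ [b Bb ->] v]; first exact: is_flagn_fnth.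
  have [BF _ _ _] := hB; apply: (BF b Bb i); by rewrite -(prednK (szF i)) ltnS.
have refine i := saturated_refinement (hD i) (stableF i).
pose G i := sval (cid (refine i)).
pose S i := sval (cid (svalP (cid (refine i)))).
have GS i : [/\ stable_flag (component_ops B i) (G i) (S i),
    saturated (component_ops B i) (G i) (S i) & refines (G i) (S i) (fnth (F i)) (size (F i)).-1].
  exact: svalP (cid (svalP (cid (refine i)))).
have flagG i : is_flagn (G i) (S i) by have [[]] := GS i.
have stableG i k : (k <= S i)%N -> ops_stable (component_ops B i) (G i k).
  by have [[_ st] _ _] := GS i; apply: st.
exists (pshifts G S 0); split.
- exists (fun i => mkseq (G i) (S i).+1); split=> [i|a]; first exact: is_flag_mkseq.
  by split=> st i; apply/flag_stab_mkseq; apply: st.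
- by move=> b Bb i; apply/shifts0P => k ks v; apply: (stableG i k ks); exists b.
- by move=> a sa i; apply/(flag_stab_fnth _ (szF i)); have [_ _] := GS i; apply; apply: sa.
- by apply: pshifts_dense => // i; have [] := GS i.
Qed.
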